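(* Let $\mathscr C$ be a small permutative category and let $X^{(1)},\dots,X^{(m)}\in\Phi(\mathscr C)$. Then: (1) there exists an $X^\bullet$-monotone injection $\phi\colon\mathbf m\times\omega\to\omega$; (2) if $\phi,\phi'\colon\mathbf m\times\omega\to\omega$ are two $X^\bullet$-monotone injections, then $\bigotimes_{i\in\omega}(\phi_*(X^\bullet))_i=\bigotimes_{i\in\omega}(\phi'_*(X^\bullet))_i$ in $\mathscr C$, and the morphism $[\phi',\phi]_{X^\bullet}\colon\phi_*(X^\bullet)\to\phi'_*(X^\bullet)$ in $\Phi(\mathscr C)$ is given by the identity morphism of this object of $\mathscr C$.
   Context: A permutative category is a symmetric monoidal category $(\mathscr C,\otimes,\mathbf 1,\tau)$ whose associativity and unit isomorphisms are identities; for $\sigma\in\Sigma_K$, the coherence isomorphism $\bigotimes_{i=1}^KA_i\to\bigotimes_{i=1}^KA_{\sigma^{-1}(i)}$ is the composite of maps $\mathrm{id}\otimes\tau\otimes\mathrm{id}$ along a decomposition of $\sigma$ into adjacent transpositions. Let $\omega=\{1,2,\dots\}$, $\mathbf m=\{1,\dots,m\}$, $\mathcal M$ the monoid of injections $\omega\to\omega$. $\Phi(\mathscr C)$ is the parsummable category whose objects are sequences $X=(X_1,X_2,\dots)$ of objects of $\mathscr C$ with $X_i=\mathbf 1$ for almost all $i$; $\mathrm{Hom}(X,Y)=\mathrm{Hom}_{\mathscr C}(\bigotimes_{i\in\omega}X_i,\bigotimes_{i\in\omega}Y_i)$ (ordered tensor product of non-unit entries; a morphism is a morphism of $\mathscr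 C$ together with its source and target); $(u_*X)_i=X_j$ if $i=u(j)$ and $\mathbf 1$ if $i\notin\mathrm{im}(u)$; the structure isomorphism $[u,1]_X\colon X\to u_*X$ is the coherence isomorphism associated to any $\sigma\in\Sigma_K$ with $\sigma(i)=u(i)$ for all $i\le K$ with $X_i\ne\mathbf1$, where $X_i=\mathbf 1=(u_*X)_i$ for $i>K$, and $[v,u]_X=[v,1]_X\circ[u,1]_X^{-1}$; $\mathrm{supp}(X)=\{i:X_i\ne\mathbf 1\}$; the sum of disjointly supported $X,Y$ has entries $X_i$ for $i\in\mathrm{supp}(X)$ and $Y_i$ otherwise, and sums of morphisms are $f\otimes g$ conjugated by the coherence isomorphisms rearranging entries. For a finite set $A$, injections $\phi,\phi'\colon A\times\omega\to\omega$ and a family $(X^{(a)})_{a\in A}$ of objects, $\phi_*(X^\bullet)=\sum_a\phi(a,-)_*(X^{(a)})$ and $[\phi',\phi]_{X^\bullet}=\sum_a[\phi'(a,-),\phi(a,-)]_{X^{(a)}}$. An injection $\phi\colon\mathbf m\times\omega\to\omega$ is $X^\bullet$-monotone if $\phi(i,j)<\phi(i',j')$ for all $i,i'\in\mathbf m$, $j,j'\in\omega$ with $(i,j)$ lexicographically smaller than $(i',j')$ and $X^{(i)}_j\ne\mathbf 1\ne X^{(i')}_{j'}$. *)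

From Stdlib Require Import ClassicalEpsilon.
From mathcomp Require Import all_boot.

Set Implicit Arguments.
Unset Strict Implicit.
Unset Printing Implicit Defensive.

(* Permutative categories (strict symmetric monoidal categories),      *)
(* presented single-sorted: a type of objects, a type of morphisms     *)
(* with source and target, identities and composition.                 *)
(* [comp g f] is g \o f (meaningful when tgt f = src g).               *)
Record permcat := PermCat {
  Ob : Type;
  Mor : Type;
  src : Mor -> Ob;
  tgt : Mor -> Ob;
  idm : Ob -> Mor;
  comp : Mor -> Mor -> Mor;
  tens : Ob -> Ob -> Ob;
  tensm : Mor -> Mor -> Mor;
  unit : Ob;
  tau : Ob -> Ob -> Mor;
  src_idm : forall A, src (idm A) = A;
  tgt_idm : forall A, tgt (idm A) = A;
  src_comp : forall f g, tgt f = src g -> src (comp g f) = src f;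
  tgt_comp : forall f g, tgt f = src g -> tgt (comp g f) = tgt g;
  comp_idl : forall f, comp (idm (tgt f)) f = f;
  comp_idr : forall f, comp f (idm (src f)) = f;
  compA : forall f g h, tgt f = src g -> tgt g = src h ->
            comp h (comp g f) = comp (comp h g) f;
  src_tensm : forall f g, src (tensm f g) = tens (src f) (src g);
  tgt_tensm : forall f g, tgt (tensm f g) = tens (tgt f) (tgt g);
  tensm_idm : forall A B, tensm (idm A) (idm B) = idm (tens A B);
  tensm_comp : forall f f' g g', tgt f = src f' -> tgt g = src g' ->
            tensm (comp f' f) (comp g' g) = comp (tensm f' g') (tensm f g);
  tensA : forall A B D, tens (tens A B) D = tens A (tens B D);
  tensmA : forall f g h, tensm (tensm f g) h = tensm f (tensm g h);
  tens1l : forall A, tens unit A = A;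
  tens1r : forall A, tens A unit = A;
  tensm1l : forall f, tensm (idm unit) f = f;
  tensm1r : forall f, tensm f (idm unit) = f;
  src_tau : forall A B, src (tau A B) = tens A B;
  tgt_tau : forall A B, tgt (tau A B) = tens B A;
  tau_nat : forall f g, comp (tau (tgt f) (tgt g)) (tensm f g)
                      = comp (tensm g f) (tau (src f) (src g));
  tau_inv : forall A B, comp (tau B A) (tau A B) = idm (tens A B);
  tau_hex : forall A B D,
      tau A (tens B D) = comp (tensm (idm B) (tau A D)) (tensm (tau A B) (idm D))
}.

Section Phi.
Variable C : permcat.
Local Notation Ob := (Ob C).
Local Notation Mor := (Mor C).
Local Notation one := (unit C).

Definition is_unit (A : Ob) : bool :=
  if excluded_middle_informative (A = one) then true else false.

Definition tensl (s : seq Ob) : Ob := foldr (@tens C) one s.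

Definition tup (X : nat -> Ob) (K : nat) : Ob := tensl (map X (iota 0 K)).

(* Objects of Phi(C): sequences with X_i = 1 for almost all i. *)
Definition supp_bound (X : nat -> Ob) (K : nat) : Prop :=
  forall i, K <= i -> X i = one.
Definition finsupp (X : nat -> Ob) : Prop := exists K, supp_bound X K.

(* \bigotimes_{i in omega} X_i : ordered tensor of the entries below a
   bound of the support (equal to the ordered tensor of the non-unit
   entries, since the unit is strict). *)
Definition bigtens (X : nat -> Ob) : Ob :=
  tup X (epsilon (inhabits 0%N) (supp_bound X)).

Definition pushf (u : nat -> nat) (X : nat -> Ob) (i : nat) : Ob :=
  match excluded_middle_informative (exists j, u j = i) with
  | left H => X (proj1_sig (constructive_indefinite_description _ H))
  | right _ => one
  end.

(* A permutation sigma of {0..K-1} is encoded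
   by the list p = [sigma^-1(0); ...; sigma^-1(K-1)], so that the target
   of the coherence iso is tensl (map X p) = (x)_i X_(sigma^-1 i). *)
Definition swapk (k : nat) (p : seq nat) : seq nat :=
  take k p ++ [:: nth 0 p k.+1; nth 0 p k] ++ drop k.+2 p.

Definition adjm (s : seq Ob) (k : nat) : Mor :=
  tensm (idm (tensl (take k s)))
        (tensm (tau (nth one s k) (nth one s k.+1)) (idm (tensl (drop k.+2 s)))).

(* [coh X K p f]: f is the composite of maps id (x) tau (x) id along some
   decomposition into adjacent transpositions of the permutation encoded
   by p, applied to X_0 (x) ... (x) X_(K-1). *)
Inductive coh (X : nat -> Ob) (K : nat) : seq nat -> Mor -> Prop :=
| coh0 : coh X K (iota 0 K) (idm (tup X K))
| cohS p f k : coh X K p f -> k.+1 < K ->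
    coh X K (swapk k p) (comp (adjm (map X p) k) f).

Definition inv (f : Mor) : Mor :=
  epsilon (inhabits f)
    (fun g => comp g f = idm (src f) /\ comp f g = idm (tgt f)).

(* [u,1]_X : X -> u_* X *)
Definition bracket1 (u : nat -> nat) (X : nat -> Ob) : Mor :=
  epsilon (inhabits (idm one)) (fun f => exists K (p : seq nat),
    (forall i, K <= i -> X i = one /\ pushf u X i = one) /\
    (forall j, j < K -> X j <> one -> u j < K /\ nth 0 p (u j) = j) /\
    coh X K p f).

Definition bracket (v u : nat -> nat) (X : nat -> Ob) : Mor :=
  comp (bracket1 v X) (inv (bracket1 u X)).

Variable m : nat.

Definition famsum (Xs : 'I_m -> nat -> Ob) (i : nat) : Ob :=
  match excluded_middle_informative (exists a, Xs a i <> one) with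
  | left H => Xs (proj1_sig (constructive_indefinite_description _ H)) i
  | right _ => one
  end.

(* rearrangement of the entries below K: first the entries of Xs 0, then
   those of Xs 1, ..., then the unit entries (each block in order) *)
Definition sum_perm (Xs : 'I_m -> nat -> Ob) (K : nat) : seq nat :=
  flatten [seq [seq i <- iota 0 K | ~~ is_unit (Xs a i)] | a <- enum 'I_m]
  ++ [seq i <- iota 0 K | [forall a, is_unit (Xs a i)]].

(* coherence iso (x)(sum_a X^(a)) -> (x)X^(0) (x) ... (x) (x)X^(m-1) *)
Definition rho (Xs : 'I_m -> nat -> Ob) : Mor :=
  epsilon (inhabits (idm one)) (fun f => exists K,
    (forall a i, K <= i -> Xs a i = one) /\ coh (famsum Xs) K (sum_perm Xs K) f).

Definition tensfam (fs : 'I_m -> Mor) : Mor :=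
  foldr (fun a acc => tensm (fs a) acc) (idm one) (enum 'I_m).

Definition summor (Xs Ys : 'I_m -> nat -> Ob) (fs : 'I_m -> Mor) : Mor :=
  comp (inv (rho Ys)) (comp (tensfam fs) (rho Xs)).

Definition phipush (phi : 'I_m * nat -> nat) (Xs : 'I_m -> nat -> Ob) :
  nat -> Ob := famsum (fun a => pushf (fun j => phi (a, j)) (Xs a)).

Definition bracket_fam (phi' phi : 'I_m * nat -> nat) (Xs : 'I_m -> nat -> Ob)
  : Mor :=
  summor (fun a => pushf (fun j => phi (a, j)) (Xs a))
         (fun a => pushf (fun j => phi' (a, j)) (Xs a))
         (fun a => bracket (fun j => phi' (a, j)) (fun j => phi (a, j)) (Xs a)).

Definition lex_lt (x y : 'I_m * nat) : bool :=
  (x.1 < y.1) || ((x.1 == y.1) && (x.2 < y.2)).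

Definition monotone (Xs : 'I_m -> nat -> Ob) (phi : 'I_m * nat -> nat) : Prop :=
  forall x y : 'I_m * nat, lex_lt x y ->
    Xs x.1 x.2 <> one -> Xs y.1 y.2 <> one -> phi x < phi y.

End Phi.

From Pilot Require Import Defs.
From Stdlib Require Import ClassicalEpsilon.
From mathcomp Require Import all_boot zify.

Set Implicit Arguments.
Unset Strict Implicit.
Unset Printing Implicit Defensive.

(* (1) Inside a common bound [K] of the supports, sending [(a, j)]
   to [a * K + j] lays the supports out block after block, in order.
   (2) Coherence: any composite of maps [id (x) tau (x) id] realising a given
   permutation equals a normal form [canon] depending only on the source and
   target orders.  Since symmetries with the strict unit are identities, such
   an isomorphism is the identity as soon as the permutation keeps the
   non-unit factors in their order.  For monotone [phi] this is the case for
   every [[phi(a,-), 1]] and for the rearrangement isomorphism used in sums;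
   hence both [phi_*(X)] and [phi'_*(X)] have tensor product
   [(x)_a (x)_i X^(a)_i] and [[phi', phi]] is the identity. *)

Lemma filter_iota_sorted (P : pred nat) K l : sorted ltn l ->
  (forall i, (i \in l) = (i < K) && P i) -> filter P (iota 0 K) = l.
Proof.
move=> l_sorted mem_l; apply: (irr_sorted_eq ltn_trans ltnn) => //.
  by apply: sorted_filter => //; [exact: ltn_trans | exact: iota_ltn_sorted].
by move=> i; rewrite mem_filter mem_iota mem_l add0n andbC.
Qed.

Lemma map_index_uniq (T : eqType) (w : seq T) :
  uniq w -> map (index^~ w) w = iota 0 (size w).
Proof.
move=> w_uniq; apply: (@eq_from_nth _ 0); rewrite ?size_map ?size_iota // => i lti.
have [x0 _] : exists x0 : T, true by case: w {w_uniq} lti => // x0; exists x0.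
by rewrite (nth_map x0) // nth_iota // add0n index_uniq.
Qed.

Lemma perm_iota_inverse K (nu : pred nat) (u : nat -> nat) : injective u ->
    (forall j, j < K -> nu j -> u j < K) ->
  exists2 p, perm_eq (iota 0 K) p & forall j, j < K -> nu j -> nth 0 p (u j) = j.
Proof.
move=> u_inj u_lt.
set S := filter nu (iota 0 K).
set dom := S ++ filter (predC nu) (iota 0 K).
set img := map u S.
set cod := img ++ filter (predC (mem img)) (iota 0 K).
have img_lt x : x \in img -> x < K.
  by case/mapP=> j; rewrite mem_filter mem_iota add0n => /andP[? /andP[_ ?]] ->; apply: u_lt.
have cod_perm : perm_eq cod (iota 0 K).
  apply: uniq_perm; rewrite ?iota_uniq //.
    rewrite cat_uniq (map_inj_uniq u_inj) !filter_uniq ?iota_uniq //= andbT.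
    by apply/hasPn=> x; rewrite mem_filter => /andP[].
  move=> x; rewrite mem_cat mem_filter mem_iota add0n /=.
  by case img_x: (x \in img); rewrite ?(img_lt _ img_x).
have dom_perm : perm_eq dom (iota 0 K) by rewrite perm_filterC.
have size_dom : size dom = K by rewrite (perm_size dom_perm) size_iota.
exists (map (fun i => nth 0 dom (index i cod)) (iota 0 K)).
  rewrite perm_sym (map_comp (nth 0 dom) (index^~ cod)).
  apply: (@perm_trans _ (map (nth 0 dom) (iota 0 K))).
    apply: perm_map; have := perm_map (index^~ cod) cod_perm.
    by rewrite map_index_uniq ?(perm_uniq cod_perm) ?iota_uniq // (perm_size cod_perm) size_iota perm_sym.
  by rewrite map_nth_iota0 ?size_dom // take_oversize ?size_dom.
move=> j ltjK nu_j.
have S_j : j \in S by rewrite mem_filter nu_j mem_iota.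
rewrite (nth_map 0) ?size_iota ?u_lt // nth_iota ?u_lt // add0n.
by rewrite index_cat map_f // index_map // nth_cat index_mem S_j nth_index.
Qed.

Lemma filter_perm_inverse (nu : pred nat) K p (u : nat -> nat) : perm_eq (iota 0 K) p ->
    {in nu &, {homo u : j j' / j < j'}} ->
    (forall j, j < K -> nu j -> u j < K /\ nth 0 p (u j) = j) ->
  filter nu p = filter nu (iota 0 K).
Proof.
move=> perm_p u_mono p_u.
have size_p : size p = K by rewrite -(perm_size perm_p) size_iota.
set S := filter nu (iota 0 K).
have pos_nu : filter (preim (nth 0 p) nu) (iota 0 K) = map u S.
  apply: filter_iota_sorted.
    apply: (homo_sorted_in u_mono (filter_all _ _)).
    by apply: sorted_filter => //; [exact: ltn_trans | exact: iota_ltn_sorted].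
  move=> i; apply/mapP/andP => [[j] | [lti /= nu_pi]].
    rewrite mem_filter mem_iota add0n => /andP[nu_j ltj] ->.
    by have [ltu /= ->] := p_u j ltj nu_j.
  have p_i : nth 0 p i \in p by rewrite mem_nth ?size_p.
  have ltpi : nth 0 p i < K by rewrite -(perm_mem perm_p) mem_iota in p_i.
  have [ltu p_u_pi] := p_u _ ltpi nu_pi.
  exists (nth 0 p i); first by rewrite mem_filter nu_pi mem_iota.
  apply/eqP; rewrite -(nth_uniq 0 (s := p)) ?size_p ?p_u_pi //.
  by rewrite -(perm_uniq perm_p) iota_uniq.
rewrite -{1}(take_oversize (leqnn (size p))) -(map_nth_iota0 0) // filter_map size_p.
rewrite pos_nu -map_comp -[RHS]map_id; apply/eq_in_map => j.
by rewrite mem_filter mem_iota add0n => /andP[nu_j ltj] /=; have [_ ->] := p_u j ltj nu_j.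
Qed.

Section AdjacentSwaps.
Variable P : seq nat -> Prop.
Hypothesis P_swap : forall L a b R, P (L ++ a :: b :: R) -> P (L ++ b :: a :: R).

Lemma adjacent_swaps_to_front x L R : P (L ++ x :: R) -> P (x :: L ++ R).
Proof.
elim/last_ind: L R => [|L y IH] R // P_LyxR.
by have := IH (y :: R); rewrite cat_rcons; apply; apply: P_swap; rewrite -cat_rcons.
Qed.

End AdjacentSwaps.

Lemma perm_adjacent_swaps_ind (P : seq nat -> Prop) s t :
    (forall L a b R, P (L ++ a :: b :: R) -> P (L ++ b :: a :: R)) ->
  P s -> perm_eq s t -> P t.
Proof.
elim: t P s => [|x t IH] P s P_swap P_s st; first by move/perm_nilP: st => <-.
have s_x : x \in s by rewrite (perm_mem st) mem_head.
rewrite -(cat_take_drop (index x s) s) (drop_nth 0) ?index_mem // nth_index // in P_s st.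
move: P_s st; set L := take _ s; set R := drop _ s => P_s st.
apply: (IH (fun l => P (x :: l)) (L ++ R)).
- by move=> L' a b R'; apply: (P_swap (x :: L')).
- exact: adjacent_swaps_to_front.
- by rewrite -(perm_cons x); apply: perm_trans st; rewrite -cat1s perm_catCA.
Qed.

Lemma rem_cat_cons (T : eqType) (x : T) L R : x \notin L -> rem x (L ++ x :: R) = L ++ R.
Proof.
elim: L => [|y L IH] /=; first by rewrite eqxx.
by rewrite inE negb_or eq_sym => /andP[/negbTE-> /IH->].
Qed.

Lemma split_first (T : eqType) (x : T) t :
  x \in t -> exists L R, t = L ++ x :: R /\ x \notin L.
Proof.
move=> t_x; exists (take (index x t) t), (drop (index x t).+1 t); split.
  by rewrite -{1}(cat_take_drop (index x t) t) (drop_nth x) ?index_mem // nth_index.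
by rewrite in_take // ltnn.
Qed.

Lemma perm_cons_cat (T : eqType) (x : T) s L R :
  perm_eq (x :: s) (L ++ x :: R) -> perm_eq s (L ++ R).
Proof. by move=> xs_LxR; rewrite -(perm_cons x) (perm_trans xs_LxR) // -cat1s perm_catCA. Qed.

Lemma uniq_cat_pair (T : eqType) (L : seq T) a b R :
  uniq (L ++ a :: b :: R) -> [/\ a \notin L, b \notin L & a != b].
Proof.
rewrite cat_uniq => /and3P[_ /hasPn L_ab /andP[a_bR _]]; split.
- by apply: L_ab; rewrite inE eqxx.
- by apply: L_ab; rewrite !inE eqxx orbT.
- by apply: contraNneq a_bR => ->; rewrite mem_head.
Qed.

Lemma split_at_pair (p : seq nat) k : k.+1 < size p ->
  exists L a b R, p = L ++ a :: b :: R /\ size L = k.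
Proof.
move=> ltk; exists (take k p), (nth 0 p k), (nth 0 p k.+1), (drop k.+2 p).
rewrite size_take (ltnW ltk); split => //.
by rewrite -{1}(cat_take_drop k p) (drop_nth 0) ?(drop_nth 0 (n := k.+1)) // ltnW.
Qed.

Lemma swapk_cat (L : seq nat) a b R : swapk (size L) (L ++ a :: b :: R) = L ++ b :: a :: R.
Proof.
rewrite /swapk take_size_cat // !nth_cat ltnn subnn ltnNge leqnSn /= subSnn /=.
by rewrite -[L ++ a :: b :: R]/(L ++ [:: a; b] ++ R) catA drop_size_cat // size_cat addn2.
Qed.

Lemma epsilon_unique (A : Type) (i : inhabited A) (P : A -> Prop) y :
  (exists x, P x) -> (forall x, P x -> x = y) -> epsilon i P = y.
Proof. by move=> exP P_y; apply/P_y/(epsilon_spec i P exP). Qed.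

Section PermutativeCategory.
Variable C : permcat.
Local Notation one := (unit C).
Local Notation tens := (@tens C).
Local Notation tensm := (@tensm C).
Local Notation comp := (@Defs.comp C).
Local Notation idm := (@idm C).
Local Notation tau := (@tau C).
Local Notation tensl := (@tensl C).

Lemma comp_idl_at f A : tgt f = A -> comp (idm A) f = f.
Proof. by move=> <-; rewrite comp_idl. Qed.

Lemma comp_idr_at f A : src f = A -> comp f (idm A) = f.
Proof. by move=> <-; rewrite comp_idr. Qed.

Lemma comp_idm A : comp (idm A) (idm A) = idm A.
Proof. by rewrite comp_idl_at ?tgt_idm. Qed.

Lemma tau_unitr A : tau A one = idm A.
Proof.
have hex := tau_hex A one one; rewrite tens1l tensm1l tensm1r in hex.
have tau_tau := tau_inv A one; rewrite tens1r in tau_tau.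
have assoc : comp (tau one A) (comp (tau A one) (tau A one))
            = comp (comp (tau one A) (tau A one)) (tau A one).
  by apply: Defs.compA; rewrite ?tgt_tau ?src_tau ?tens1l ?tens1r.
rewrite -hex tau_tau comp_idl_at in assoc => //.
by rewrite tgt_tau tens1l.
Qed.

Lemma tau_unitl A : tau one A = idm A.
Proof.
have := tau_inv A one; rewrite tau_unitr tens1r => <-.
by rewrite comp_idr_at // src_tau tens1l.
Qed.

Lemma tensl_cat s1 s2 : tensl (s1 ++ s2) = tens (tensl s1) (tensl s2).
Proof. by elim: s1 => [|a s IH]; rewrite /= ?tens1l // /tensl /= -/(tensl _) IH tensA. Qed.

Lemma tensm_comp_idr f f' B : tgt f = src f' ->
  tensm (comp f' f) (idm B) = comp (tensm f' (idm B)) (tensm f (idm B)).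
Proof. by move=> ff'; rewrite -tensm_comp ?comp_idm ?tgt_idm ?src_idm. Qed.

Lemma tensm_comp_idl f f' A : tgt f = src f' ->
  tensm (idm A) (comp f' f) = comp (tensm (idm A) f') (tensm (idm A) f).
Proof. by move=> ff'; rewrite -tensm_comp ?comp_idm ?tgt_idm ?src_idm. Qed.

Lemma tensm_idr_idl f g A B : src f = A -> tgt g = B ->
  comp (tensm f (idm B)) (tensm (idm A) g) = tensm f g.
Proof. by move=> <- <-; rewrite -tensm_comp ?tgt_idm ?src_idm // comp_idr comp_idl_at. Qed.

Lemma tensm_idl_idr f g A B : tgt f = A -> src g = B ->
  comp (tensm (idm A) g) (tensm f (idm B)) = tensm f g.
Proof. by move=> <- <-; rewrite -tensm_comp ?tgt_idm ?src_idm // comp_idl comp_idr_at. Qed.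

Lemma tau_natr A g :
  comp (tau A (tgt g)) (tensm (idm A) g) = comp (tensm g (idm A)) (tau A (src g)).
Proof. by have := tau_nat (idm A) g; rewrite tgt_idm src_idm. Qed.

End PermutativeCategory.

Lemma is_unitP (C : permcat) (A : Ob C) : reflect (A = unit C) (is_unit A).
Proof. by rewrite /is_unit; case: excluded_middle_informative => ?; constructor. Qed.

Definition nonunit (C : permcat) (X : nat -> Ob C) : pred nat := fun i => ~~ is_unit (X i).

Lemma nonunitP (C : permcat) (X : nat -> Ob C) i : reflect (X i <> unit C) (nonunit X i).
Proof. by rewrite /nonunit; case: is_unitP => ?; constructor. Qed.

Section Coherence.
Variables (C : permcat) (X : nat -> Ob C).
Local Notation one := (unit C).
Local Notation tens := (@tens C).
Local Notation tensm := (@tensm C).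
Local Notation comp := (@Defs.comp C).
Local Notation idm := (@idm C).
Local Notation tau := (@tau C).

Definition tens_at (s : seq nat) := tensl (map X s).

Lemma tens_at_nil : tens_at [::] = one. Proof. by []. Qed.
Lemma tens_at_cons x s : tens_at (x :: s) = tens (X x) (tens_at s). Proof. by []. Qed.
Lemma tens_at_cat s1 s2 : tens_at (s1 ++ s2) = tens (tens_at s1) (tens_at s2).
Proof. by rewrite /tens_at map_cat tensl_cat. Qed.

Ltac ends := repeat progress rewrite ?src_tensm ?tgt_tensm ?src_tau ?tgt_tau
  ?src_idm ?tgt_idm ?tens_at_cat ?tens_at_cons ?tens_at_nil ?tensA ?tens1l ?tens1r.

(* A normal form for coherence isomorphisms [tens_at s -> tens_at t]: the
   factor of the head of [s] is moved to its place in [t], recursively. *)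
Fixpoint canon (s t : seq nat) : Mor C :=
  match s with
  | [::] => idm one
  | x :: s' =>
      comp (tensm (tau (X x) (tens_at (take (index x t) t)))
                  (idm (tens_at (drop (index x t).+1 t))))
           (tensm (idm (X x)) (canon s' (rem x t)))
  end.

Lemma canon_cons x s L R : x \notin L ->
  canon (x :: s) (L ++ x :: R) =
  comp (tensm (tau (X x) (tens_at L)) (idm (tens_at R)))
       (tensm (idm (X x)) (canon s (L ++ R))).
Proof.
move=> xL /=; rewrite take_pivot // index_pivot // rem_cat_cons //.
by rewrite drop_cat ltnNge leqnSn /= subSn // subnn /= drop0.
Qed.

Lemma canon_ends s t : perm_eq s t ->
  src (canon s t) = tens_at s /\ tgt (canon s t) = tens_at t.
Proof.
elim: s t => [|x s IH] t st.
  by move: st; rewrite perm_sym => /perm_nilP->; rewrite src_idm tgt_idm.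
have t_x : x \in t by rewrite -(perm_mem st) mem_head.
have [L [R [Et xL]]] := split_first t_x; subst t.
have [src_s tgt_s] := IH _ (perm_cons_cat st).
rewrite canon_cons // src_comp ?tgt_comp; ends; rewrite ?src_s ?tgt_s; ends => //.
Qed.

Lemma canon_tgt s t : perm_eq s t -> tgt (canon s t) = tens_at t.
Proof. by case/canon_ends. Qed.

Lemma canon_id s : canon s s = idm (tens_at s).
Proof.
elim: s => [|x s IH] //=.
by rewrite eqxx /= drop0 IH tau_unitr !tensm_idm comp_idm.
Qed.

Definition adj L a b R := tensm (idm (tens_at L)) (tensm (tau (X a) (X b)) (idm (tens_at R))).

Lemma adj_src L a b R : src (adj L a b R) = tens_at (L ++ a :: b :: R).
Proof. by rewrite /adj; ends. Qed.

Lemma adj_tgt L a b R : tgt (adj L a b R) = tens_at (L ++ b :: a :: R).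
Proof. by rewrite /adj; ends. Qed.

Lemma adj_inv L a b R : comp (adj L a b R) (adj L b a R) = idm (tens_at (L ++ b :: a :: R)).
Proof.
rewrite /adj -tensm_comp; ends => //; rewrite -tensm_comp; ends => //.
by rewrite tau_inv !comp_idm !tensm_idm; ends.
Qed.

Lemma canon_swap_fst a b s L R : a \notin L -> a != b -> perm_eq s (L ++ b :: R) ->
  canon (a :: s) (L ++ b :: a :: R) = comp (adj L a b R) (canon (a :: s) (L ++ a :: b :: R)).
Proof.
move=> aL ab perm_s.
have aLb : a \notin L ++ [:: b] by rewrite mem_cat inE negb_or aL ab.
have [_ tgt_s] := canon_ends perm_s.
rewrite -[L ++ b :: a :: R]/(L ++ [:: b] ++ a :: R) catA !canon_cons // -catA.
rewrite tens_at_cat tens_at_cons tens_at_nil tens1r tau_hex tensm_comp_idr; last by ends.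
rewrite !tensmA -/(adj L a b R) tens_at_cons -tensm_idm.
by rewrite [in RHS]Defs.compA //; ends; rewrite ?tgt_s; ends.
Qed.

Lemma canon_swap_snd a b s L R : b \notin L -> a != b -> perm_eq s (L ++ a :: R) ->
  canon (b :: s) (L ++ b :: a :: R) = comp (adj L a b R) (canon (b :: s) (L ++ a :: b :: R)).
Proof.
move=> bL ab perm_s.
have perm_bs : perm_eq (b :: s) (L ++ b :: a :: R).
  by rewrite perm_sym -[L ++ _]/(L ++ [:: b] ++ a :: R) perm_catCA perm_cons perm_sym.
rewrite (canon_swap_fst bL _ perm_s) 1?eq_sym // Defs.compA ?adj_src ?adj_tgt ?canon_tgt //.
by rewrite adj_inv comp_idl_at ?canon_tgt.
Qed.

Lemma canon_swap_left x s L1 L2 a b R : x \notin L1 ->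
    perm_eq s ((L1 ++ L2) ++ a :: b :: R) ->
    canon s ((L1 ++ L2) ++ b :: a :: R)
      = comp (adj (L1 ++ L2) a b R) (canon s ((L1 ++ L2) ++ a :: b :: R)) ->
  canon (x :: s) ((L1 ++ x :: L2) ++ b :: a :: R)
    = comp (adj (L1 ++ x :: L2) a b R) (canon (x :: s) ((L1 ++ x :: L2) ++ a :: b :: R)).
Proof.
move=> xL1 perm_s swap_s; have [_ tgt_s] := canon_ends perm_s.
rewrite -!catA in swap_s tgt_s *; rewrite !cat_cons !canon_cons // swap_s.
rewrite tensm_comp_idl; last by rewrite tgt_s adj_src catA.
have -> : adj (L1 ++ L2) a b R = tensm (idm (tens_at L1)) (adj L2 a b R).
  by rewrite /adj tens_at_cat -tensm_idm tensmA.
have -> : adj (L1 ++ x :: L2) a b R = tensm (idm (tens (tens_at L1) (X x))) (adj L2 a b R).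
  by rewrite /adj tens_at_cat tens_at_cons -!tensm_idm !tensmA.
rewrite -(tensmA (idm (X x))) tensm_idm.
rewrite Defs.compA; try by ends; rewrite ?tgt_s ?adj_src ?adj_tgt; ends.
rewrite [in RHS]Defs.compA; try by ends; rewrite ?tgt_s ?adj_src ?adj_tgt; ends.
by rewrite tensm_idr_idl ?src_tau ?adj_tgt // tensm_idl_idr ?tgt_tau ?adj_src.
Qed.

Lemma canon_swap_right x s L a b R1 R2 : x \notin L ++ a :: b :: R1 ->
    perm_eq s (L ++ a :: b :: R1 ++ R2) ->
    canon s (L ++ b :: a :: R1 ++ R2)
      = comp (adj L a b (R1 ++ R2)) (canon s (L ++ a :: b :: R1 ++ R2)) ->
  canon (x :: s) (L ++ b :: a :: R1 ++ x :: R2)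
    = comp (adj L a b (R1 ++ x :: R2)) (canon (x :: s) (L ++ a :: b :: R1 ++ x :: R2)).
Proof.
move=> xLR1 perm_s swap_s; have [_ tgt_s] := canon_ends perm_s.
have xLR1' : x \notin L ++ b :: a :: R1.
  by move: xLR1; rewrite !mem_cat !inE; case: (x == a); case: (x == b); rewrite ?orbT.
have assoc c d : L ++ c :: d :: R1 ++ x :: R2 = (L ++ [:: c, d & R1]) ++ x :: R2.
  by rewrite -catA.
rewrite !assoc !canon_cons // -!catA !cat_cons swap_s.
rewrite tensm_comp_idl; last by rewrite tgt_s adj_src.
have -> : adj L a b (R1 ++ R2) = tensm (adj L a b R1) (idm (tens_at R2)).
  by rewrite /adj tens_at_cat -!tensm_idm !tensmA.
have -> : adj L a b (R1 ++ x :: R2)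
          = tensm (tensm (adj L a b R1) (idm (X x))) (idm (tens_at R2)).
  by rewrite /adj tens_at_cat tens_at_cons -!tensm_idm !tensmA.
rewrite -(tensmA (idm (X x))).
rewrite !Defs.compA; try by ends; rewrite ?tgt_s ?adj_src ?adj_tgt; ends.
rewrite -tensm_comp; try by ends; rewrite ?adj_src ?adj_tgt; ends.
rewrite -[in RHS]tensm_comp; try by ends; rewrite ?adj_src ?adj_tgt; ends.
by rewrite comp_idm -(adj_tgt L a b R1) tau_natr adj_src.
Qed.

Lemma canon_swap s L a b R : uniq (L ++ a :: b :: R) -> perm_eq s (L ++ a :: b :: R) ->
  canon s (L ++ b :: a :: R) = comp (adj L a b R) (canon s (L ++ a :: b :: R)).
Proof.
elim: s L a b R => [|x s IH] L a b R uniq_t perm_s.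
  by have := perm_size perm_s; rewrite size_cat addnS.
have [aL bL ab] := uniq_cat_pair uniq_t.
have : x \in L ++ a :: b :: R by rewrite -(perm_mem perm_s) mem_head.
rewrite mem_cat !inE => /orP[xL | /or3P[/eqP xa | /eqP xb | xR]].
- have [L1 [L2 [EL xL1]]] := split_first xL; subst L.
  have perm_s' : perm_eq s ((L1 ++ L2) ++ a :: b :: R).
    by rewrite -catA; apply: (@perm_cons_cat _ x); rewrite -catA in perm_s.
  apply: canon_swap_left => //; apply: IH perm_s'.
  by have := rem_uniq x uniq_t; rewrite -catA cat_cons rem_cat_cons // catA.
- by subst x; apply: canon_swap_fst => //; apply: perm_cons_cat perm_s.
- subst x; apply: canon_swap_snd => //.
  rewrite -[L ++ a :: b :: R]/(L ++ [:: a] ++ b :: R) catA in perm_s.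
  by rewrite -[L ++ a :: R]/(L ++ [:: a] ++ R) catA; apply: perm_cons_cat perm_s.
- have [R1 [R2 [ER _]]] := split_first xR; subst R.
  have assoc : L ++ a :: b :: R1 ++ x :: R2 = (L ++ [:: a, b & R1]) ++ x :: R2.
    by rewrite -catA.
  rewrite assoc in uniq_t perm_s.
  have xLR1 : x \notin L ++ a :: b :: R1.
    by move: uniq_t; rewrite cat_uniq => /and3P[_ /norP[]].
  have perm_s' : perm_eq s (L ++ a :: b :: R1 ++ R2).
    by rewrite -[L ++ _ :: _ :: R1 ++ R2]/(L ++ [:: a, b & R1] ++ R2) catA; apply: perm_cons_cat perm_s.
  apply: canon_swap_right => //; apply: IH perm_s'.
  by have := rem_uniq x uniq_t; rewrite rem_cat_cons // -catA.
Qed.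

Lemma adjm_cat L a b R : adjm (map X (L ++ a :: b :: R)) (size L) = adj L a b R.
Proof.
rewrite /adjm map_cat take_size_cat ?size_map // !nth_cat size_map ltnn subnn.
rewrite ltnNge leqnSn /= subSnn /= -[map X L ++ _]/(map X L ++ [:: X a; X b] ++ map X R).
by rewrite catA drop_size_cat // size_cat size_map addn2.
Qed.

Lemma coh_perm K p f : coh X K p f -> perm_eq (iota 0 K) p.
Proof.
elim=> {p f} [|p f k _ perm_p ltk]; first exact: perm_refl.
have ltp : k.+1 < size p by rewrite -(perm_size perm_p) size_iota.
have [L [a [b [R [Ep <-]]]]] := split_at_pair ltp.
rewrite Ep swapk_cat; apply: (perm_trans perm_p); rewrite Ep perm_cat2l.
by rewrite -[a :: b :: R]/([:: a] ++ [:: b] ++ R) perm_catCA.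
Qed.

Lemma coh_canon K p f : coh X K p f -> f = canon (iota 0 K) p.
Proof.
elim=> {p f} [|p f k coh_f -> ltk]; first by rewrite canon_id.
have perm_p := coh_perm coh_f.
have ltp : k.+1 < size p by rewrite -(perm_size perm_p) size_iota.
have [L [a [b [R [Ep <-]]]]] := split_at_pair ltp.
rewrite Ep swapk_cat adjm_cat [RHS]canon_swap -?Ep //.
by rewrite -(perm_uniq perm_p) iota_uniq.
Qed.

Lemma coh_exists K p : perm_eq (iota 0 K) p -> exists f, coh X K p f.
Proof.
move=> perm_p; apply: (perm_adjacent_swaps_ind (P := fun q => exists f, coh X K q f) _ _ perm_p).
  2: by exists (idm (tup X K)); constructor.
move=> L a b R [f coh_f].
have ltK : (size L).+1 < K.
  by have := perm_size (coh_perm coh_f); rewrite size_iota size_cat /= => ->; rewrite addnS ltnS -addn1 leq_add2l.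
by exists (comp (adjm (map X (L ++ a :: b :: R)) (size L)) f); rewrite -swapk_cat; apply: cohS.
Qed.

Lemma tens_at_filter s : tens_at (filter (nonunit X) s) = tens_at s.
Proof.
elim: s => [|x s IH] //=; rewrite /nonunit; case: is_unitP => [X_x|_] /=;
  by rewrite tens_at_cons IH // X_x tens1l.
Qed.

Lemma canon_nonunit s t : uniq s -> perm_eq s t ->
  filter (nonunit X) s = filter (nonunit X) t -> canon s t = idm (tens_at s).
Proof.
elim: s t => [|x s IH] t uniq_s st filter_st.
  by move: st; rewrite perm_sym => /perm_nilP->.
have t_x : x \in t by rewrite -(perm_mem st) mem_head.
have [L [R [Et xL]]] := split_first t_x; subst t.
have /andP[_ {}uniq_s] := uniq_s.
have perm_s := perm_cons_cat st.
have [_ tgt_s] := canon_ends perm_s.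
rewrite canon_cons //.
case nu_x : (nonunit X x); move: filter_st; rewrite /= filter_cat /= nu_x => filter_st.
- have filter_L : filter (nonunit X) L = [::].
    case E: (filter (nonunit X) L) filter_st => [|y l] //= [Eyx _].
    have : y \in filter (nonunit X) L by rewrite E mem_head.
    by rewrite mem_filter -Eyx (negbTE xL) andbF.
  have L_unit : tens_at L = one by rewrite -tens_at_filter filter_L.
  have canon_s : canon s (L ++ R) = idm (tens_at s).
    by apply: IH => //; move: filter_st; rewrite filter_cat filter_L => -[].
  rewrite canon_s tgt_idm tens_at_cat L_unit tens1l in tgt_s.
  by rewrite canon_s L_unit tau_unitr !tensm_idm tens_at_cons tgt_s comp_idm.
- have X_x : X x = one by apply/is_unitP; move/negbFE: nu_x.
  have canon_s : canon s (L ++ R) = idm (tens_at s) by rewrite IH ?filter_cat.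
  rewrite canon_s tgt_idm in tgt_s.
  rewrite canon_s X_x tau_unitl tensm1l tensm_idm -tens_at_cat -tgt_s comp_idm.
  by rewrite tens_at_cons X_x tens1l.
Qed.

Lemma coh_idm K p f : coh X K p f ->
  filter (nonunit X) p = filter (nonunit X) (iota 0 K) -> f = idm (tup X K).
Proof.
move=> coh_f filter_p; rewrite (coh_canon coh_f) canon_nonunit ?iota_uniq //.
exact: coh_perm coh_f.
Qed.

End Coherence.

Section Support.
Variables (C : permcat) (X : nat -> Ob C).
Local Notation one := (unit C).

Lemma nonunit_supp K j : supp_bound X K -> nonunit X j -> j < K.
Proof. by move=> X_K /nonunitP; rewrite ltnNge; apply: contra_notN => /X_K. Qed.

Lemma filter_nonunit_supp K K' : supp_bound X K -> K <= K' ->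
  filter (nonunit X) (iota 0 K') = filter (nonunit X) (iota 0 K).
Proof.
move=> X_K leKK'; rewrite -(subnKC leKK') iotaD filter_cat add0n.
rewrite (@eq_in_filter _ _ pred0 (iota K (K' - K))) ?filter_pred0 ?cats0 // => i.
by rewrite mem_iota => /andP[leKi _]; apply/negbTE/negP => /nonunitP; apply; apply: X_K.
Qed.

Lemma tup_supp K K' : supp_bound X K -> supp_bound X K' -> tup X K = tup X K'.
Proof.
move=> X_K X_K'; rewrite /tup -/(tens_at X (iota 0 K)) -/(tens_at X (iota 0 K')).
rewrite -tens_at_filter -[RHS]tens_at_filter.
by case: (leqP K K') => [/(filter_nonunit_supp X_K)-> | /ltnW/(filter_nonunit_supp X_K')->].
Qed.

Lemma bigtens_tup K : supp_bound X K -> bigtens X = tup X K.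
Proof. by move=> X_K; rewrite /bigtens; apply: (tup_supp _ X_K); apply: epsilon_spec; exists K. Qed.

Variant pushf_spec (u : nat -> nat) (i : nat) : Ob C -> Prop :=
| PushfOut of (forall j, u j <> i) : pushf_spec u i one
| PushfIn j of u j = i : pushf_spec u i (X j).

Lemma pushfP u i : pushf_spec u i (pushf u X i).
Proof.
rewrite /pushf; case: excluded_middle_informative => [ex_j | no_j].
  by case: constructive_indefinite_description => j /= ?; apply: PushfIn.
by apply: PushfOut => j uj; apply: no_j; exists j.
Qed.

Lemma pushfE u j : injective u -> pushf u X (u j) = X j.
Proof. by move=> u_inj; case: pushfP => [/(_ j) // | j' /u_inj->]. Qed.

Lemma pushf_supp u K : injective u -> supp_bound X K ->
  supp_bound (pushf u X) (\max_(j < K) (u j).+1).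
Proof.
move=> u_inj X_K i lei; case: pushfP => // j uji.
case: (leqP K j) => [/X_K // | ltjK].
have := leq_trans (leq_bigmax (F := fun j : 'I_K => (u j).+1) (Ordinal ltjK)) lei.
by rewrite /= uji ltnn.
Qed.

Lemma bracket1_idm u : injective u -> {in nonunit X &, {homo u : j j' / j < j'}} ->
  finsupp X -> bracket1 u X = idm (bigtens X).
Proof.
move=> u_inj u_mono [K0 X_K0]; rewrite /bracket1; apply: epsilon_unique.
  pose K := maxn K0 (\max_(j < K0) (u j).+1).
  have ltuK j : nonunit X j -> u j < K.
    move=> /(nonunit_supp X_K0) ltj; rewrite leq_max; apply/orP; right.
    exact: (leq_bigmax (F := fun j : 'I_K0 => (u j).+1) (Ordinal ltj)).
  have [p perm_p p_u] := perm_iota_inverse u_inj (fun j _ => ltuK j).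
  have [f coh_f] := coh_exists X perm_p.
  exists f, K, p; split; [|split] => //.
    move=> i leKi; split; first by apply: X_K0; apply: leq_trans leKi; apply: leq_maxl.
    by apply: (pushf_supp u_inj X_K0); apply: leq_trans leKi; apply: leq_maxr.
  move=> j ltj /nonunitP nu_j; split; first exact: ltuK.
  exact: p_u.
move=> f [K [p [bound [p_u coh_f]]]].
rewrite (@bigtens_tup K) => [|i /bound[] //].
apply: (coh_idm coh_f); apply: filter_perm_inverse (coh_perm coh_f) u_mono _.
by move=> j ltj /nonunitP; apply: p_u.
Qed.

End Support.

Lemma bigtens_pushf (C : permcat) (X : nat -> Ob C) u : injective u ->
  {in nonunit X &, {homo u : j j' / j < j'}} -> finsupp X -> bigtens (pushf u X) = bigtens X.
Proof.
move=> u_inj u_mono [K0 X_K0].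
have pX_K := pushf_supp u_inj X_K0; set K := \max_(j < K0) _ in pX_K.
rewrite (bigtens_tup X_K0) (bigtens_tup pX_K) /tup.
rewrite -/(tens_at _ (iota 0 K)) -/(tens_at X (iota 0 K0)) -tens_at_filter -[RHS]tens_at_filter.
set S := filter (nonunit X) (iota 0 K0).
have -> : filter (nonunit (pushf u X)) (iota 0 K) = map u S.
  apply: filter_iota_sorted.
    apply: (homo_sorted_in u_mono (filter_all _ _)).
    by apply: sorted_filter => //; [exact: ltn_trans | exact: iota_ltn_sorted].
  move=> i; apply/mapP/andP => [[j] | [lti]].
    rewrite mem_filter mem_iota add0n => /andP[nu_j _] ->.
    have nu_uj : nonunit (pushf u X) (u j) by rewrite /nonunit pushfE.
    by rewrite nu_uj (nonunit_supp pX_K).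
  rewrite /nonunit; case: pushfP => [_ | j <- nu_j]; first by case: is_unitP.
  by exists j; rewrite // mem_filter mem_iota add0n; apply/andP; split => //; apply: nonunit_supp X_K0 _.
by rewrite /tens_at -map_comp; congr tensl; apply: eq_map => j; apply: pushfE.
Qed.

Lemma supp_bound_le (C : permcat) (X : nat -> Ob C) K K' :
  K <= K' -> supp_bound X K -> supp_bound X K'.
Proof. by move=> leKK' X_K i /(leq_trans leKK'); apply: X_K. Qed.

Lemma finsupp_common_bound (C : permcat) (I : finType) (Ys : I -> nat -> Ob C) :
  (forall a, finsupp (Ys a)) -> exists K, forall a, supp_bound (Ys a) K.
Proof.
move=> /fin_all_exists[K Ys_K]; exists (\max_a K a) => a.
exact: supp_bound_le (leq_bigmax a) (Ys_K a).
Qed.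

Definition tensfam_ob (C : permcat) m (A : 'I_m -> Ob C) : Ob C :=
  foldr (fun a B => tens (A a) B) (unit C) (enum 'I_m).

Lemma eq_tensfam_ob (C : permcat) m (A B : 'I_m -> Ob C) :
  A =1 B -> tensfam_ob A = tensfam_ob B.
Proof. by move=> AB; rewrite /tensfam_ob; elim: (enum 'I_m) => //= a l ->; rewrite AB. Qed.

Lemma tensfam_idm (C : permcat) m (A : 'I_m -> Ob C) (fs : 'I_m -> Mor C) :
  (forall a, fs a = idm (A a)) -> tensfam fs = idm (tensfam_ob A).
Proof.
by move=> fsE; rewrite /tensfam /tensfam_ob; elim: (enum 'I_m) => //= a l ->; rewrite fsE tensm_idm.
Qed.

Section FamilySum.
Variables (C : permcat) (m : nat) (Ys : 'I_m -> nat -> Ob C).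
Local Notation one := (unit C).
Local Notation F := (famsum Ys).

Lemma famsum_unit i : (forall a, ~~ nonunit (Ys a) i) -> F i = one.
Proof.
move=> units; rewrite /famsum; case: excluded_middle_informative => // - [a].
by move/nonunitP: (units a).
Qed.

Lemma famsum_supp K : (forall a, supp_bound (Ys a) K) -> supp_bound F K.
Proof. by move=> Ys_K i leKi; apply: famsum_unit => a; apply/negP => /nonunitP; apply; apply: Ys_K. Qed.

Hypothesis Ys_disjoint : forall a b i, nonunit (Ys a) i -> nonunit (Ys b) i -> a = b.

Lemma famsumE a i : nonunit (Ys a) i -> F i = Ys a i.
Proof.
move=> nu_a; rewrite /famsum; case: excluded_middle_informative => [ex_b | []]; last first.
  by exists a; apply/nonunitP.
by case: constructive_indefinite_description => b /= /nonunitP /(Ys_disjoint nu_a) ->.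
Qed.

Lemma nonunit_famsum i : nonunit F i = [exists a, nonunit (Ys a) i].
Proof.
case: existsP => [[a nu_a] | no_a]; first by rewrite /nonunit (famsumE nu_a).
rewrite /nonunit famsum_unit; first by case: is_unitP.
by move=> a; apply/negP => nu_a; apply: no_a; exists a.
Qed.

Hypothesis Ys_ordered :
  forall (a b : 'I_m) i i', a < b -> nonunit (Ys a) i -> nonunit (Ys b) i' -> i < i'.

Lemma flatten_blocks K :
  flatten [seq filter (nonunit (Ys a)) (iota 0 K) | a <- enum 'I_m] = filter (nonunit F) (iota 0 K).
Proof.
apply/esym/filter_iota_sorted; last first.
  move=> i; apply/flatten_mapP/andP => [[a _] | [ltiK]].
    rewrite mem_filter mem_iota add0n => /andP[nu_a ltiK].
    by rewrite nonunit_famsum; split => //; apply/existsP; exists a.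
  rewrite nonunit_famsum => /existsP[a nu_a]; exists a; first by rewrite mem_enum.
  by rewrite mem_filter mem_iota add0n ltiK nu_a.
have enum_sorted : pairwise (fun a b : 'I_m => a < b) (enum 'I_m).
  by have := iota_ltn_sorted 0 m; rewrite -val_enum_ord sorted_pairwise ?pairwise_map //; apply: ltn_trans.
rewrite sorted_pairwise; last exact: ltn_trans.
elim: (enum 'I_m) enum_sorted => [|a l IH] //= /andP[lt_a_l sorted_l].
rewrite pairwise_cat IH // andbT; apply/andP; split.
  apply/allrelP => i i'; rewrite mem_filter => /andP[nu_i _] /flatten_mapP[b l_b].
  rewrite mem_filter => /andP[nu_i' _]; apply: Ys_ordered nu_i nu_i'.
  exact: (allP lt_a_l).
rewrite -sorted_pairwise; last exact: ltn_trans.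
by apply: sorted_filter => //; [exact: ltn_trans | exact: iota_ltn_sorted].
Qed.

Lemma sum_perm_split K :
  sum_perm Ys K = filter (nonunit F) (iota 0 K) ++ filter (predC (nonunit F)) (iota 0 K).
Proof.
rewrite /sum_perm flatten_blocks; congr (_ ++ _); apply: eq_filter => i.
by rewrite /= nonunit_famsum negb_exists; apply: eq_forallb => a; rewrite negbK.
Qed.

Hypothesis Ys_finsupp : forall a, finsupp (Ys a).

Lemma rho_idm : rho Ys = idm (bigtens F).
Proof.
have [K0 Ys_K0] := finsupp_common_bound Ys_finsupp.
rewrite /rho; apply: epsilon_unique => [|f [K [Ys_K coh_f]]].
  have perm_K0 : perm_eq (iota 0 K0) (sum_perm Ys K0) by rewrite sum_perm_split perm_sym perm_filterC.
  by have [f coh_f] := coh_exists F perm_K0; exists f, K0.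
rewrite (coh_idm coh_f) ?(bigtens_tup (famsum_supp Ys_K)) // sum_perm_split filter_cat filter_id.
by rewrite -filter_predI (@eq_filter _ (predI _ (predC _)) pred0) ?filter_pred0 ?cats0 // => i /=; rewrite andbN.
Qed.

Lemma bigtens_famsum : bigtens F = tensfam_ob (fun a => bigtens (Ys a)).
Proof.
have [K Ys_K] := finsupp_common_bound Ys_finsupp.
rewrite (bigtens_tup (famsum_supp Ys_K)) /tup -/(tens_at F _) -tens_at_filter -flatten_blocks.
rewrite /tensfam_ob; elim: (enum 'I_m) => [|a l IH] //=; rewrite tens_at_cat IH; congr tens.
rewrite (bigtens_tup (Ys_K a)) /tup -/(tens_at (Ys a) _) -[RHS]tens_at_filter /tens_at.
by congr tensl; apply/eq_in_map => i; rewrite mem_filter => /andP[nu_i _]; apply: famsumE.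
Qed.

End FamilySum.

Section MonotoneInjection.
Variables (C : permcat) (m : nat) (Xs : 'I_m -> nat -> Ob C) (phi : 'I_m * nat -> nat).
Hypotheses (Xs_finsupp : forall a, finsupp (Xs a)) (phi_inj : injective phi).
Hypothesis phi_mono : monotone Xs phi.
Local Notation push a := (pushf (fun j => phi (a, j)) (Xs a)).

Lemma row_inj a : injective (fun j => phi (a, j)).
Proof. by move=> j j' /phi_inj[]. Qed.

Lemma row_mono a : {in nonunit (Xs a) &, {homo (fun j => phi (a, j)) : j j' / j < j'}}.
Proof.
move=> j j' /nonunitP nu_j /nonunitP nu_j' ltjj'.
by apply: (phi_mono (x := (a, j)) (y := (a, j'))); rewrite // /lex_lt /= eqxx ltjj' orbT.
Qed.

Lemma nonunit_push a i : nonunit (push a) i -> exists2 j, phi (a, j) = i & nonunit (Xs a) j.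
Proof. by rewrite /nonunit; case: pushfP => [_ | j <- nu_j]; [case: is_unitP | exists j]. Qed.

Lemma push_disjoint a b i : nonunit (push a) i -> nonunit (push b) i -> a = b.
Proof. by move=> /nonunit_push[j <- _] /nonunit_push[j' /phi_inj[]]. Qed.

Lemma push_ordered (a b : 'I_m) i i' : a < b ->
  nonunit (push a) i -> nonunit (push b) i' -> i < i'.
Proof.
move=> ltab /nonunit_push[j <- /nonunitP nu_j] /nonunit_push[j' <- /nonunitP nu_j'].
by apply: (phi_mono (x := (a, j)) (y := (b, j'))); rewrite // /lex_lt /= ltab.
Qed.

Lemma push_finsupp a : finsupp (push a).
Proof. by have [K Xs_K] := Xs_finsupp a; eexists; apply: (pushf_supp (@row_inj a) Xs_K). Qed.

Lemma bigtens_phipush : bigtens (phipush phi Xs) = tensfam_ob (fun a => bigtens (Xs a)).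
Proof.
rewrite /phipush bigtens_famsum; [|exact: push_disjoint|exact: push_ordered|exact: push_finsupp].
by apply: eq_tensfam_ob => a; apply: bigtens_pushf; [exact: @row_inj | exact: row_mono |].
Qed.

Lemma bracket1_row a : bracket1 (fun j => phi (a, j)) (Xs a) = idm (bigtens (Xs a)).
Proof. by apply: bracket1_idm; [exact: @row_inj | exact: row_mono |]. Qed.

Lemma rho_phipush : rho (fun a => push a) = idm (bigtens (phipush phi Xs)).
Proof. by apply: rho_idm; [exact: push_disjoint|exact: push_ordered|exact: push_finsupp]. Qed.

End MonotoneInjection.

Lemma mulnD_inj d q q' x y : x < d -> y < d -> q * d + x = q' * d + y -> q = q' /\ x = y.
Proof.
move=> ltx lty E; have d_gt0 : 0 < d by apply: leq_ltn_trans ltx.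
split; first by have := congr1 (divn^~ d) E; rewrite /= !divnMDl // !divn_small // !addn0.
by have := congr1 (modn^~ d) E; rewrite /= !modnMDl !modn_small.
Qed.

Lemma monotone_injection_exists (C : permcat) m (Xs : 'I_m -> nat -> Ob C) :
  (forall a, finsupp (Xs a)) -> exists phi : 'I_m * nat -> nat, injective phi /\ monotone Xs phi.
Proof.
move=> /finsupp_common_bound[K Xs_K].
exists (fun x : 'I_m * nat => if x.2 < K then x.1 * K + x.2 else m * K + pickle x); split.
  move=> [a j] [b j'] /=; have ltam := ltn_ord a; have ltbm := ltn_ord b.
  case: ifP => ltj; case: ifP => ltj' E.
  - by have [/val_inj-> ->] := mulnD_inj ltj ltj' E.
  - by exfalso; nia.
  - by exfalso; nia.
  - exact/(pcan_inj pickleK)/(addnI E).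
move=> [a j] [b j'] /= lt_ab /nonunitP nu_j /nonunitP nu_j'.
have ltjK := nonunit_supp (Xs_K a) nu_j; have ltj'K := nonunit_supp (Xs_K b) nu_j'.
rewrite ltjK ltj'K.
by case/orP: lt_ab => /= [ltab | /andP[/eqP-> ltjj']]; [nia | rewrite ltn_add2l].
Qed.

Lemma inv_idm_cancel (C : permcat) (A : Ob C) :
  Defs.comp (Defs.inv (idm A)) (idm A) = idm A /\ Defs.comp (idm A) (Defs.inv (idm A)) = idm A.
Proof.
have := @epsilon_spec _ (inhabits (idm A))
  (fun g => Defs.comp g (idm A) = idm (src (idm A)) /\ Defs.comp (idm A) g = idm (tgt (idm A))).
rewrite /Defs.inv src_idm tgt_idm; apply.
by exists (idm A); rewrite comp_idm.
Qed.

Lemma bracket_fam_idm (C : permcat) m (Xs : 'I_m -> nat -> Ob C) phi phi' :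
    (forall a, finsupp (Xs a)) ->
    injective phi -> monotone Xs phi -> injective phi' -> monotone Xs phi' ->
  bracket_fam phi' phi Xs = idm (tensfam_ob (fun a => bigtens (Xs a))).
Proof.
move=> Xs_finsupp phi_inj phi_mono phi'_inj phi'_mono.
have bracket_a a : bracket (fun j => phi' (a, j)) (fun j => phi (a, j)) (Xs a) = idm (bigtens (Xs a)).
  by rewrite /bracket !bracket1_row //; case: (inv_idm_cancel (bigtens (Xs a))).
rewrite /bracket_fam /summor (tensfam_idm bracket_a) !rho_phipush //.
rewrite !bigtens_phipush // comp_idm.
by case: (inv_idm_cancel (tensfam_ob (fun a => bigtens (Xs a)))).
Qed.

Theorem proposition2p12 (C : permcat) (m : nat) (Xs : 'I_m -> nat -> Ob C)
  (HX : forall a, finsupp (Xs a)) :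
  (exists phi : 'I_m * nat -> nat, injective phi /\ monotone Xs phi) /\
  (forall phi phi' : 'I_m * nat -> nat,
     injective phi -> monotone Xs phi ->
     injective phi' -> monotone Xs phi' ->
     bigtens (phipush phi Xs) = bigtens (phipush phi' Xs) /\
     bracket_fam phi' phi Xs = idm (bigtens (phipush phi Xs))).
Proof.
split; first exact: monotone_injection_exists.
move=> phi phi' phi_inj phi_mono phi'_inj phi'_mono.
rewrite !bigtens_phipush //; split => //.
exact: bracket_fam_idm.
Qed.
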